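(* There is a universal constant $C$ such that the following holds. Let $n,m,n',m',k$ be non-negative integers and $0<\gamma\le\frac12$ with $k\le\gamma n$ and $n'\le\gamma n$. Suppose $|m-\frac n2|\le t\sqrt n$ and $|m'-\frac{n'}{2}|\le t\sqrt{n'}$ for some $t\le\frac{1}{100\sqrt\gamma}$. Then $$\mathrm{d_{TV}}(\mathcal{H}_{n,m,k},\mathcal{H}_{n-n',m-m',k})\le C(1+t)\gamma.$$
   Context: $\mathcal{H}_{N,M,k}$ is the hypergeometric distribution: the number of red balls obtained when drawing $k$ balls without replacement from $N$ balls of which $M$ are red. $\mathrm{d_{TV}}$ denotes total variation distance. *)

From HB Require Import structures.
From mathcomp Require Import all_boot all_order all_algebra.
From mathcomp Require Import reals.
Set Implicit Arguments. Unset Strict Implicit. Unset Printing Implicit Defensive.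
Import Order.TTheory GRing.Theory Num.Theory.
Local Open Scope ring_scope.

(* Support is contained in {0,...,k}, so we index j by 'I_k.+1.
   Meaningful when M <= N and k <= N (assumed in the statement). *)
Definition hyp_pmf (R : realType) (N M k : nat) (j : 'I_k.+1) : R :=
  ('C(M, j) * 'C(N - M, k - j))%:R / ('C(N, k))%:R.

Definition dTV (R : realType) (T : finType) (p q : T -> R) : R :=
  2^-1 * \sum_(x : T) `|p x - q x|.

From HB Require Import structures.
From mathcomp Require Import all_boot all_order all_algebra.
From mathcomp Require Import reals.
From mathcomp Require Import ring lra zify.
Set Implicit Arguments. Unset Strict Implicit. Unset Printing Implicit Defensive.
Import Order.TTheory GRing.Theory Num.Theory.
Local Open Scope ring_scope.

(* Write H(k; r, b) for the number of red balls among k drawn from an urn with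
   r red and b blue balls, N = r + b.  The ratio H(k; r, b)(j) / H(k; r+1, b)(j)
   is affine in j, so removing one red ball moves H in l1 by N/(r(N-k)) E|j - mu|,
   which the variance bound Var <= k turns into O(sqrt k / n).  Removing a red and
   a blue ball at once gives a ratio quadratic in j - mu whose constant and linear
   parts nearly cancel, so it costs only O((k + |r - b| sqrt k) / n^2).  One passes
   from (m, n - m) to (m - m', n - n' - (m - m')) by at most n' pair removals and
   |n' - 2m'| single-colour moves, both colours staying above 9n/20 throughout;
   since |r - b| <= 2t sqrt n and |n' - 2m'| <= 2t sqrt n', the total is
   O(gamma^2 + t gamma).  For gamma > 1/100 the trivial bound dTV <= 1 suffices. *)

Lemma sum_quadratic (F : comNzRingType) (I : finType) (w x : I -> F) a b c :
  \sum_i w i * (a + b * x i + c * x i ^+ 2) =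
  a * (\sum_i w i) + b * (\sum_i w i * x i) + c * (\sum_i w i * x i ^+ 2).
Proof. by rewrite !mulr_sumr -!big_split; apply: eq_bigr => i _ /=; ring. Qed.

Lemma abs_moment_le_sqrt (F : rcfType) (I : finType) (w x : I -> F) (c K : F) :
  (forall i, 0 <= w i) -> \sum_i w i = 1 -> 0 < K ->
  \sum_i w i * (x i - c) ^+ 2 <= K ->
  \sum_i w i * `|x i - c| <= Num.sqrt K.
Proof.
move=> w_ge0 w_sum1 K_gt0 var_le.
set s := Num.sqrt K.
have s_gt0 : 0 < s by rewrite sqrtr_gt0.
have s2 : s ^+ 2 = K by rewrite sqr_sqrtr // ltW.
have amgm i : w i * `|x i - c| <= w i * ((x i - c) ^+ 2 + s ^+ 2) / (2 * s).
  rewrite -mulrA ler_wpM2l // ler_pdivlMr ?mulr_gt0 //.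
  have := sqr_ge0 (`|x i - c| - s).
  rewrite -[(x i - c) ^+ 2]real_normK ?num_real //; nra.
apply: le_trans (ler_sum _ (fun i _ => amgm i)) _.
rewrite -mulr_suml.
have -> : \sum_i w i * ((x i - c) ^+ 2 + s ^+ 2) =
    \sum_i w i * (x i - c) ^+ 2 + s ^+ 2 * \sum_i w i.
  by rewrite mulr_sumr -big_split; apply: eq_bigr => i _ /=; ring.
rewrite w_sum1 mulr1 ler_pdivrMr ?mulr_gt0 //; nra.
Qed.

Lemma natr_mul_bin_down (F : pzRingType) (n a : nat) :
  ('C(n.-1, a) * n)%:R = ('C(n, a))%:R * (n%:R - a%:R) :> F.
Proof.
rewrite mulnC mul_bin_down mulnC.
have [le_an|lt_na] := leqP a n; first by rewrite natrM natrB.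
by rewrite bin_small // mul0n mul0r.
Qed.

(* Bounds on the l1 cost of removing one ball, resp. one red-blue pair, from an urn
   of n balls in which both colours exceed 9n/20; [a] is the colour imbalance. *)
Definition red_cost (F : rcfType) (n k : F) : F := 5 * Num.sqrt k / n.

Definition pair_cost (F : rcfType) (n k a : F) : F := (23 * k + 10 * a * Num.sqrt k) / n ^+ 2.

Lemma red_cost_ge0 (F : rcfType) (n k : F) : 0 <= n -> 0 <= red_cost n k.
Proof. by move=> n_ge0; rewrite /red_cost divr_ge0 ?mulr_ge0 ?sqrtr_ge0. Qed.

Lemma pair_cost_ge0 (F : rcfType) (n k a : F) : 0 <= k -> 0 <= a -> 0 <= pair_cost n k a.
Proof.
move=> k_ge0 a_ge0.
by rewrite /pair_cost divr_ge0 ?sqr_ge0 // addr_ge0 ?mulr_ge0 ?sqrtr_ge0.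
Qed.

Lemma red_factor_le (F : realFieldType) (r b K n : F) :
  9 * n <= 20 * r -> 9 * n <= 20 * b -> 1 <= K -> 100 * K <= n ->
  (r + b) / (r * (r + b - K)) <= 5 / n.
Proof.
move=> le_r le_b K_ge1 le_Kn.
have n_gt0 : 0 < n by lra.
have r_gt0 : 0 < r by lra.
have NK_gt0 : 0 < r + b - K by lra.
rewrite ler_pdivrMr ?mulr_gt0 // mulrAC ler_pdivlMr //.
nra.
Qed.

Lemma pair_factor_le (F : realFieldType) (r b N K n s : F) :
  N = r + b -> 9 * n <= 20 * r -> 9 * n <= 20 * b -> 1 <= K -> 100 * K <= n -> 0 <= s ->
  (r * b * (N - K) * K / N + `|r - b| * (N - K) * (N - 1) * s + N * (N - 1) * K)
    / (r * b * (N - K) * (N - 1 - K)) <= (23 * K + 10 * `|r - b| * s) / n ^+ 2.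
Proof.
move=> eN le_r le_b K_ge1 le_Kn s_ge0.
have n_gt0 : 0 < n by lra.
have r_gt0 : 0 < r by lra.
have b_gt0 : 0 < b by lra.
have NK_gt0 : 0 < N - K by lra.
have NK1_gt0 : 0 < N - 1 - K by lra.
have N_gt0 : 0 < N by lra.
have N1_gt0 : 0 < N - 1 by lra.
have rb_gt0 : 0 < r * b by exact: mulr_gt0.
have n2_gt0 : 0 < n ^+ 2 by exact: exprn_gt0.
have n2_le : n ^+ 2 <= 5 * (r * b) by nra.
rewrite [X in _ <= X](_ : _ = 3 * K / n ^+ 2 + 10 * `|r - b| * s / n ^+ 2 + 20 * K / n ^+ 2);
  last by rewrite !mulrDl; ring.
rewrite mulrDl mulrDl; apply: lerD; first apply: lerD.
- rewrite (_ : _ / _ = K / (N * (N - 1 - K))); last by field; rewrite !gt_eqF.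
  rewrite ler_pdivrMr ?mulr_gt0 // mulrAC ler_pdivlMr //.
  have : n ^+ 2 <= 3 * (N * (N - 1 - K)) by nra.
  nra.
- rewrite (_ : _ / _ = `|r - b| * s * ((N - 1) / (r * b * (N - 1 - K))));
    last by field; rewrite !gt_eqF.
  rewrite (_ : 10 * _ * s / _ = `|r - b| * s * (10 / n ^+ 2)); last by ring.
  rewrite ler_wpM2l ?mulr_ge0 // ler_pdivrMr ?mulr_gt0 // mulrAC ler_pdivlMr //.
  have : N - 1 <= 2 * (N - 1 - K) by lra.
  nra.
- rewrite (_ : _ / _ = K * (N * (N - 1) / (r * b * ((N - K) * (N - 1 - K)))));
    last by field; rewrite !gt_eqF.
  rewrite (_ : 20 * K / _ = K * (20 / n ^+ 2)); last by ring.
  apply: ler_wpM2l; first lra.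
  rewrite ler_pdivrMr ?mulr_gt0 // mulrAC ler_pdivlMr //.
  have NN_le : N * (N - 1) <= 4 * ((N - K) * (N - 1 - K)) by nra.
  have := ler_pM (ltW (mulr_gt0 N_gt0 N1_gt0)) (ltW n2_gt0) NN_le n2_le.
  nra.
Qed.

Lemma path_cost_le (F : rcfType) (g t n n' K a s : F) :
  0 < g -> g <= 1 -> 0 <= t -> 0 < n -> 0 <= n' -> n' <= g * n -> 0 <= K -> K <= g * n ->
  0 <= a -> a <= 2 * t * Num.sqrt n -> s <= 2 * t * Num.sqrt n' ->
  2^-1 * (n' * pair_cost n K a + s * red_cost n K) <= 100 * (1 + t) * g.
Proof.
move=> g_gt0 g_le1 t_ge0 n_gt0 n'_ge0 n'_le K_ge0 K_le a_ge0 a_le s_le.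
have gn_ge0 : 0 <= g * n by rewrite mulr_ge0 ?ltW.
have gn_le : g * n <= n by nra.
have sqrt_le x y : 0 <= y -> x <= y ^+ 2 -> Num.sqrt x <= y.
  by move=> y_ge0 le_xy; rewrite -(ger0_norm y_ge0) -sqrtr_sqr ler_sqrt ?sqr_ge0.
set sk := Num.sqrt K; set sn := Num.sqrt n in a_le *; set sn' := Num.sqrt n' in s_le *.
have sk_ge0 : 0 <= sk := sqrtr_ge0 K.
have sksn : sk * sn <= n by rewrite -sqrtrM //; apply: sqrt_le; [exact: ltW | nra].
have sn'sk : sn' * sk <= g * n by rewrite -sqrtrM //; apply: sqrt_le; rewrite // expr2 ler_pM.
have X_ge0 : 0 <= 23 * K + 10 * a * sk by rewrite addr_ge0 ?mulr_ge0.
have X_le : 23 * K + 10 * a * sk <= (23 * g + 20 * t) * n.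
  have := ler_wpM2r sk_ge0 a_le.
  have : 0 <= t * (n - sk * sn) by rewrite mulr_ge0 // subr_ge0.
  nra.
have pair_le : n' * pair_cost n K a <= g * (23 * g + 20 * t).
  rewrite /pair_cost -/sk mulrA ler_pdivrMr ?exprn_gt0 //.
  have := ler_pM n'_ge0 X_ge0 n'_le X_le.
  nra.
have red_le : s * red_cost n K <= 10 * t * g.
  apply: le_trans (ler_wpM2r (red_cost_ge0 _ (ltW n_gt0)) s_le) _.
  rewrite /red_cost -/sk mulrA ler_pdivrMr //.
  have : 0 <= t * (g * n - sn' * sk) by rewrite mulr_ge0 // subr_ge0.
  nra.
nra.
Qed.

Lemma sqrt_dev_le (F : rcfType) (g t n : F) :
  0 < g -> 0 <= t -> t <= (100 * Num.sqrt g)^-1 -> 1 <= g * n -> t * Num.sqrt n <= n / 100.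
Proof.
move=> g_gt0 t_ge0 t_le gn_ge1.
have n_gt0 : 0 < n by rewrite -(pmulr_rgt0 _ g_gt0); lra.
have sgsn_ge1 : 1 <= Num.sqrt g * Num.sqrt n.
  by rewrite -(sqrtrM _ (ltW g_gt0)) -sqrtr1 ler_sqrt; lra.
set sg := Num.sqrt g in t_le sgsn_ge1 *; set sn := Num.sqrt n in sgsn_ge1 *.
have sg_gt0 : 0 < sg by rewrite sqrtr_gt0.
have sn_ge0 : 0 <= sn := sqrtr_ge0 n.
have sn2 : sn ^+ 2 = n by rewrite sqr_sqrtr ?ltW.
have tsg : t * (100 * sg) <= 1.
  by move: t_le; rewrite -div1r ler_pdivlMr ?mulr_gt0.
have : 0 <= t * sn * (sg * sn - 1) by rewrite !mulr_ge0 // subr_ge0.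
have : 0 <= (1 - t * (100 * sg)) * n by rewrite mulr_ge0 ?subr_ge0 // ltW.
rewrite -sn2; nra.
Qed.

Lemma balanced_counts (F : realFieldType) (n m n' m' : nat) :
  (m <= n)%N -> (m' <= m)%N -> (m - m' <= n - n')%N -> 100 * n'%:R <= n%:R :> F ->
  `|m%:R - n%:R / 2| <= n%:R / 100 :> F -> `|m'%:R - n'%:R / 2| <= n%:R / 100 :> F ->
  [/\ 9 * n <= 20 * (m - m'), 9 * n <= 20 * (n - m) & 9 * n <= 20 * (n - n' - (m - m'))]%N.
Proof.
move=> le_mn le_m'm le_mm' n'_le; rewrite !ler_norml => /andP[dm1 dm2] /andP[dm'1 dm'2].
have le_n'n : (n' <= n)%N by rewrite -(ler_nat F); lra.
by split; rewrite -(ler_nat F) !natrM !natrB //; lra.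
Qed.

Section Hypergeometric.
Variable R : realType.

Definition hypg (k r b : nat) (j : 'I_k.+1) : R := hyp_pmf R (r + b) r j.
Arguments hypg : clear implicits.

Lemma hypgE k r b j :
  hypg k r b j = ('C(r, j) * 'C(b, k - j))%:R / ('C(r + b, k))%:R.
Proof. by rewrite /hypg /hyp_pmf addKn. Qed.

Lemma hyp_pmfE (N M k : nat) : (M <= N)%N -> @hyp_pmf R N M k =1 hypg k M (N - M).
Proof. by move=> le_MN j; rewrite /hypg subnKC. Qed.

Lemma hypg_ge0 k r b j : 0 <= hypg k r b j.
Proof. by rewrite hypgE divr_ge0. Qed.

Lemma hypg_sum1 k r b : (k <= r + b)%N -> \sum_j hypg k r b j = 1.
Proof.
move=> le_k_rb; under eq_bigr => j _ do rewrite hypgE.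
rewrite -mulr_suml -natr_sum binomial.Vandermonde mulfV //.
by rewrite pnatr_eq0 -lt0n bin_gt0.
Qed.

Lemma hypgC k r b j : hypg k r b j = hypg k b r (rev_ord j).
Proof.
rewrite !hypgE /= addnC mulnC subKn //.
by have := ltn_ord j; rewrite ltnS.
Qed.

Lemma hypg_addR k r b (j : 'I_k.+1) : (k <= r + b)%N ->
  hypg k r b j * (r.+1%:R * ((r.+1 + b)%:R - k%:R)) =
  hypg k r.+1 b j * ((r.+1%:R - j%:R) * (r.+1 + b)%:R).
Proof.
move=> le_k_rb; rewrite !hypgE.
have F1 := natr_mul_bin_down R r.+1 j.
have F2 := natr_mul_bin_down R (r.+1 + b) k.
rewrite addSn /= in F2; rewrite /= in F1.
rewrite !natrM in F1 F2 *.
have r1_neq0 : (r.+1%:R : R) != 0 by rewrite pnatr_eq0.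
have N_neq0 : ((r + b).+1%:R : R) != 0 by rewrite pnatr_eq0.
have Nk_neq0 : ((r + b).+1%:R - k%:R : R) != 0.
  by rewrite -natrB ?pnatr_eq0; apply/eqP; lia.
set a := 'C(r, j)%:R in F1 *; set a1 := 'C(r.+1, j)%:R in F1 *.
set c := 'C(r + b, k)%:R in F2 *; set c1 := 'C((r + b).+1, k)%:R in F2 *.
have c1_neq0 : c1 != 0 by rewrite pnatr_eq0 -lt0n bin_gt0; lia.
have -> : a = a1 * (r.+1%:R - j%:R) / r.+1%:R by rewrite -F1 mulfK.
have -> : c = c1 * ((r + b).+1%:R - k%:R) / (r + b).+1%:R by rewrite -F2 mulfK.
rewrite addSn; field.
by rewrite -natrD !nat1r c1_neq0 N_neq0 r1_neq0 Nk_neq0.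
Qed.

Lemma hypg_addRB k r b (j : 'I_k.+1) : (k <= r + b)%N ->
  hypg k r b j * (r.+1%:R * b.+1%:R * ((r + b).+2%:R - k%:R) * ((r + b).+1%:R - k%:R)) =
  hypg k r.+1 b.+1 j *
    ((r.+1%:R - j%:R) * (b.+1%:R - (k - j)%:R) * (r + b).+2%:R * (r + b).+1%:R).
Proof.
move=> le_k_rb; rewrite !hypgE addSn addnS.
have F1 := natr_mul_bin_down R r.+1 j; have F3 := natr_mul_bin_down R b.+1 (k - j).
have F2 := natr_mul_bin_down R (r + b).+1 k; have F4 := natr_mul_bin_down R (r + b).+2 k.
rewrite /= in F1 F2 F3 F4.
rewrite !natrM in F1 F2 F3 F4 *.
have r1_neq0 : (r.+1%:R : R) != 0 by rewrite pnatr_eq0.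
have b1_neq0 : (b.+1%:R : R) != 0 by rewrite pnatr_eq0.
have N1_neq0 : ((r + b).+1%:R : R) != 0 by rewrite pnatr_eq0.
have N2_neq0 : ((r + b).+2%:R : R) != 0 by rewrite pnatr_eq0.
have N1k_neq0 : ((r + b).+1%:R - k%:R : R) != 0.
  by rewrite -natrB ?pnatr_eq0; apply/eqP; lia.
have N2k_neq0 : ((r + b).+2%:R - k%:R : R) != 0.
  by rewrite -natrB ?pnatr_eq0; apply/eqP; lia.
set a := 'C(r, j)%:R in F1 *; set a1 := 'C(r.+1, j)%:R in F1 *.
set d := 'C(b, k - j)%:R in F3 *; set d1 := 'C(b.+1, k - j)%:R in F3 *.
set c := 'C(r + b, k)%:R in F2 *; set c1 := 'C((r + b).+1, k)%:R in F2 F4 *.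
set c2 := 'C((r + b).+2, k)%:R in F4 *.
have c2_neq0 : c2 != 0 by rewrite pnatr_eq0 -lt0n bin_gt0; lia.
have -> : a = a1 * (r.+1%:R - j%:R) / r.+1%:R by rewrite -F1 mulfK.
have -> : d = d1 * (b.+1%:R - (k - j)%:R) / b.+1%:R by rewrite -F3 mulfK.
have -> : c = c1 * ((r + b).+1%:R - k%:R) / (r + b).+1%:R by rewrite -F2 mulfK.
have -> : c1 = c2 * ((r + b).+2%:R - k%:R) / (r + b).+2%:R by rewrite -F4 mulfK.
have e2 : (2 + (r%:R + b%:R) : R) = (r + b).+2%:R by rewrite -natrD !mulrSr; ring.
field.
by rewrite e2 -natrD !nat1r c2_neq0 N1_neq0 N2_neq0 r1_neq0 b1_neq0 N1k_neq0 N2k_neq0.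
Qed.

Lemma hypg_mean k r b : (k <= r + b)%N ->
  \sum_j hypg k r.+1 b j * j%:R = r.+1%:R * k%:R / (r.+1 + b)%:R.
Proof.
move=> le_k_rb; set N : R := (r.+1 + b)%:R.
have N_neq0 : N != 0 by rewrite pnatr_eq0 addSn.
have e : \sum_j hypg k r b j * (r.+1%:R * (N - k%:R)) =
    \sum_j hypg k r.+1 b j * (r.+1%:R * N + - N * j%:R + 0 * j%:R ^+ 2).
  by apply: eq_bigr => j _; rewrite hypg_addR //; ring.
rewrite sum_quadratic -mulr_suml !hypg_sum1 // in e; last by lia.
by apply: (canRL (mulfK N_neq0)); lra.
Qed.

Definition hypg_dist (k r b r' b' : nat) : R :=
  \sum_j `|hypg k r b j - hypg k r' b' j|.

Lemma hypg_dist_triangle k r1 b1 r2 b2 r3 b3 :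
  hypg_dist k r1 b1 r3 b3 <= hypg_dist k r1 b1 r2 b2 + hypg_dist k r2 b2 r3 b3.
Proof.
rewrite /hypg_dist -big_split /=; apply: ler_sum => j _.
by apply: le_trans (ler_normD _ _); rewrite addrA subrK.
Qed.

Lemma hypg_distC k r b r' b' : hypg_dist k r b r' b' = hypg_dist k r' b' r b.
Proof. by apply: eq_bigr => j _; rewrite distrC. Qed.

Lemma hypg_dist_swap k r b r' b' : hypg_dist k r b r' b' = hypg_dist k b r b' r'.
Proof.
rewrite /hypg_dist (reindex_inj rev_ord_inj) /=.
by apply: eq_bigr => j _; rewrite !(hypgC _ _ (rev_ord j)) rev_ordK.
Qed.

Lemma hypg_dist_refl k r b : hypg_dist k r b r b = 0.
Proof. by rewrite /hypg_dist big1 // => j _; rewrite subrr normr0. Qed.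

Lemma hypg_dist0 r b r' b' : hypg_dist 0 r b r' b' = 0.
Proof.
rewrite /hypg_dist big1 // => j _; rewrite !hypgE.
by rewrite [j]ord1 /= !bin0 subrr normr0.
Qed.

Lemma hypg_dist_le2 k r b r' b' :
  (k <= r + b)%N -> (k <= r' + b')%N -> hypg_dist k r b r' b' <= 2.
Proof.
move=> le_k_rb le_k_rb'.
apply: le_trans (_ : \sum_j (hypg k r b j + hypg k r' b' j) <= 2); last first.
  by rewrite big_split /= !hypg_sum1.
apply: ler_sum => j _; apply: le_trans (ler_normB _ _) _.
by rewrite !ger0_norm ?hypg_ge0.
Qed.

Section Moments.
Variables k r b : nat.
Hypothesis le_k_rb : (k <= r + b)%N.

Local Notation rr := (r.+1%:R : R).
Local Notation bb := (b.+1%:R : R).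
Local Notation K := (k%:R : R).
Local Notation N := (rr + bb).
Local Notation mu := (rr * K / N).

Lemma hypg_var :
  \sum_j hypg k r.+1 b.+1 j * (j%:R - mu) ^+ 2 =
  K * rr * bb * (N - K) / (N ^+ 2 * (N - 1)).
Proof.
have S0 : \sum_j hypg k r.+1 b.+1 j = 1 by apply: hypg_sum1; lia.
have S1 : \sum_j hypg k r.+1 b.+1 j * j%:R = mu by rewrite hypg_mean ?natrD //; lia.
set S2 := \sum_j hypg k r.+1 b.+1 j * j%:R ^+ 2.
have eN2 : (r + b).+2%:R = N by rewrite -natrD addSn addnS.
have eN1 : (r + b).+1%:R = N - 1 by rewrite -eN2 [in RHS]mulrSr addrK.
have r_ge0 := ler0n R r; have b_ge0 := ler0n R b.
set X := rr * bb * (N - K) * (N - 1 - K).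
have E2 : \sum_j hypg k r b j * X =
    \sum_j hypg k r.+1 b.+1 j * (rr * (bb - K) * (N * (N - 1))
      + (rr - bb + K) * (N * (N - 1)) * j%:R + - (N * (N - 1)) * j%:R ^+ 2).
  apply: eq_bigr => j _; have le_jk : (j <= k)%N by rewrite -ltnS.
  by have := hypg_addRB j le_k_rb; rewrite eN2 eN1 natrB // /X => ->; ring.
rewrite sum_quadratic -/S2 S0 S1 -mulr_suml hypg_sum1 // mul1r in E2.
have eS2 : S2 = (rr * (bb - K) * (N * (N - 1)) + (rr - bb + K) * (N * (N - 1)) * mu - X)
    / (N * (N - 1)).
  by rewrite E2; field; apply/andP; split; apply: lt0r_neq0; lra.
have -> : \sum_j hypg k r.+1 b.+1 j * (j%:R - mu) ^+ 2 =
    \sum_j hypg k r.+1 b.+1 j * (mu ^+ 2 + - (2 * mu) * j%:R + 1 * j%:R ^+ 2).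
  by apply: eq_bigr => j _; congr (_ * _); ring.
rewrite sum_quadratic -/S2 S0 S1 eS2 /X.
by field; apply/andP; split; apply: lt0r_neq0; lra.
Qed.

Lemma hypg_var_le : \sum_j hypg k r.+1 b.+1 j * (j%:R - mu) ^+ 2 <= K.
Proof.
have N2 : 2 <= N by rewrite -natrD ler_nat; lia.
have K_le : K <= N by rewrite -natrD ler_nat; lia.
have K_ge0 : 0 <= K := ler0n R k.
rewrite hypg_var ler_pdivrMr; last by apply: mulr_gt0; nra.
have rb_le : rr * bb <= N ^+ 2 / 4 by have := sqr_ge0 (rr - bb); lra.
have : rr * bb * (N - K) <= N ^+ 2 / 4 * N.
  by apply: ler_pM => //; try lra; apply: mulr_ge0.
have : N ^+ 2 / 4 * N <= N ^+ 2 * (N - 1) by rewrite -mulrA ler_wpM2l ?sqr_ge0 //; lra.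
nra.
Qed.

Hypothesis k_gt0 : (0 < k)%N.

Let cast_bounds : [/\ 1 <= K, K <= N - 2, 0 < rr & 0 < bb].
Proof.
split; rewrite ?ler1n ?ltr0Sn //.
by rewrite -natrD -[2]/(2%:R) -natrB ?ler_nat; lia.
Qed.

Lemma hypg_dist_red : hypg_dist k r.+1 b.+1 r b.+1 <= N / (rr * (N - K)) * Num.sqrt K.
Proof.
have [K_ge1 K_le rr_gt0 bb_gt0] := cast_bounds.
have coef_ge0 : 0 <= N / (rr * (N - K)) by apply: divr_ge0; [lra | apply: mulr_ge0; lra].
have diff j : `|hypg k r.+1 b.+1 j - hypg k r b.+1 j| =
    N / (rr * (N - K)) * (hypg k r.+1 b.+1 j * `|j%:R - mu|).
  have le_k : (k <= r + b.+1)%N by lia.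
  have := hypg_addR j le_k; rewrite natrD => addR.
  have -> : hypg k r b.+1 j = hypg k r.+1 b.+1 j * ((rr - j%:R) * N) / (rr * (N - K)).
    by rewrite -addR mulfK // mulf_neq0 // lt0r_neq0 //; lra.
  have -> : hypg k r.+1 b.+1 j - hypg k r.+1 b.+1 j * ((rr - j%:R) * N) / (rr * (N - K)) =
      N / (rr * (N - K)) * (hypg k r.+1 b.+1 j * (j%:R - mu)).
    by field; rewrite !lt0r_neq0 //; lra.
  by rewrite normrM (ger0_norm coef_ge0) normrM (ger0_norm (hypg_ge0 _ _ j)).
rewrite /hypg_dist (eq_bigr _ (fun j _ => diff j)) -mulr_sumr ler_wpM2l //.
apply: abs_moment_le_sqrt; first exact: hypg_ge0.
- by apply: hypg_sum1; lia.
- lra.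
- exact: hypg_var_le.
Qed.

Local Notation D := (rr * bb * (N - K) * (N - 1 - K)).

Lemma hypg_subRB (j : 'I_k.+1) :
  hypg k r b j - hypg k r.+1 b.+1 j =
  hypg k r.+1 b.+1 j * (rr * bb * (N - K) * K / N
    + (rr - bb) * (N - K) * (N - 1) * (j%:R - mu) - N * (N - 1) * (j%:R - mu) ^+ 2) / D.
Proof.
have [K_ge1 K_le rr_gt0 bb_gt0] := cast_bounds.
have le_jk : (j <= k)%N by rewrite -ltnS.
have eN2 : (r + b).+2%:R = N by rewrite -natrD addSn addnS.
have eN1 : (r + b).+1%:R = N - 1 by rewrite -eN2 [in RHS]mulrSr addrK.
have := hypg_addRB j le_k_rb; rewrite eN2 eN1 natrB // => addRB.
have -> : hypg k r b j = hypg k r.+1 b.+1 j *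
    ((rr - j%:R) * (bb - (K - j%:R)) * N * (N - 1)) / D.
  by rewrite -addRB mulfK // !mulf_neq0 // lt0r_neq0 //; lra.
by field; rewrite !lt0r_neq0 //; lra.
Qed.

Lemma hypg_dist_pair : hypg_dist k r.+1 b.+1 r b <=
  (rr * bb * (N - K) * K / N + `|rr - bb| * (N - K) * (N - 1) * Num.sqrt K
    + N * (N - 1) * K) / D.
Proof.
have [K_ge1 K_le rr_gt0 bb_gt0] := cast_bounds.
have D_gt0 : 0 < D by rewrite !mulr_gt0 //; lra.
set T := rr * bb * (N - K) * K / N; set L := (rr - bb) * (N - K) * (N - 1).
set Q := N * (N - 1).
have T_ge0 : 0 <= T by rewrite /T divr_ge0 ?mulr_ge0 //; lra.
have Q_ge0 : 0 <= Q by rewrite /Q mulr_ge0 //; lra.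
have diff j : `|hypg k r.+1 b.+1 j - hypg k r b j| <=
    (T * hypg k r.+1 b.+1 j + `|L| * (hypg k r.+1 b.+1 j * `|j%:R - mu|)
      + Q * (hypg k r.+1 b.+1 j * (j%:R - mu) ^+ 2)) / D.
  rewrite distrC hypg_subRB -/T -/L -/Q.
  set h := hypg k r.+1 b.+1 j; set u := j%:R - mu.
  have h_ge0 : 0 <= h := hypg_ge0 _ _ j.
  rewrite normrM (gtr0_norm (_ : 0 < D^-1)) ?invr_gt0 //.
  rewrite ler_wpM2r ?invr_ge0 ?(ltW D_gt0) //.
  rewrite normrM (ger0_norm h_ge0).
  have -> : T * h + `|L| * (h * `|u|) + Q * (h * u ^+ 2) =
      h * (T + `|L| * `|u| + Q * u ^+ 2) by ring.
  rewrite ler_wpM2l // (le_trans (ler_normB _ _)) // lerD //.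
    by rewrite (le_trans (ler_normD _ _)) // (ger0_norm T_ge0) normrM.
  by rewrite ger0_norm // mulr_ge0 ?sqr_ge0.
apply: le_trans (ler_sum _ (fun j _ => diff j)) _.
rewrite -mulr_suml !big_split /= -!mulr_sumr ler_wpM2r ?invr_ge0 ?(ltW D_gt0) //.
rewrite hypg_sum1 ?mulr1; last by lia.
have eL : `|L| = `|rr - bb| * (N - K) * (N - 1).
  by rewrite !normrM !(@ger0_norm _ (N - _)) //; lra.
rewrite eL; apply: lerD; first apply: lerD => //.
  rewrite ler_wpM2l ?mulr_ge0 //; try lra.
  apply: abs_moment_le_sqrt; first exact: hypg_ge0.
  - by apply: hypg_sum1; lia.
  - lra.
  - exact: hypg_var_le.
by rewrite ler_wpM2l // hypg_var_le.
Qed.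

End Moments.

Section Path.
Variables k n : nat.
Hypotheses (k_gt0 : (0 < k)%N) (k_small : (100 * k <= n)%N).

Local Notation balanced x := (9 * n <= 20 * x)%N.
Local Notation rc := (red_cost n%:R k%:R).
Local Notation pc a := (pair_cost n%:R k%:R a).

Lemma hypg_dist_red_step r b : balanced r -> balanced b -> hypg_dist k r.+1 b r b <= rc.
Proof.
case: b => [|b] bal_r bal_b; first lia.
have le_k_rb : (k <= r + b)%N by lia.
apply: le_trans (hypg_dist_red le_k_rb k_gt0) _.
rewrite /red_cost [X in _ <= X]mulrAC ler_wpM2r ?sqrtr_ge0 //.
by apply: red_factor_le; rewrite -?natrM ?ler_nat ?ler1n //; lia.
Qed.

Lemma hypg_dist_pair_step r b : balanced r -> balanced b ->
  hypg_dist k r.+1 b.+1 r b <= pc `|r%:R - b%:R|.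
Proof.
move=> bal_r bal_b; have le_k_rb : (k <= r + b)%N by lia.
apply: le_trans (hypg_dist_pair le_k_rb k_gt0) _.
have -> : r%:R - b%:R = r.+1%:R - b.+1%:R :> R by rewrite -!nat1r; ring.
by apply: pair_factor_le; rewrite ?sqrtr_ge0 -?natrM ?ler_nat ?ler1n //; lia.
Qed.

Lemma hypg_dist_addR r b i : balanced r -> balanced b ->
  hypg_dist k (r + i) b r b <= i%:R * rc.
Proof.
move=> bal_r bal_b; elim: i => [|i IH]; first by rewrite addn0 hypg_dist_refl mul0r.
apply: le_trans (hypg_dist_triangle k _ _ (r + i) b _ _) _.
rewrite addnS -nat1r mulrDl mul1r lerD // hypg_dist_red_step //; lia.
Qed.

Lemma hypg_dist_addB r b i : balanced r -> balanced b ->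
  hypg_dist k r (b + i) r b <= i%:R * rc.
Proof. by move=> bal_r bal_b; rewrite hypg_dist_swap hypg_dist_addR. Qed.

Lemma hypg_dist_addRB r b i : balanced r -> balanced b ->
  hypg_dist k (r + i) (b + i) r b <= i%:R * pc `|r%:R - b%:R|.
Proof.
move=> bal_r bal_b; elim: i => [|i IH]; first by rewrite !addn0 hypg_dist_refl mul0r.
apply: le_trans (hypg_dist_triangle k _ _ (r + i) (b + i) _ _) _.
rewrite !addnS -nat1r mulrDl mul1r lerD //.
have -> : r%:R - b%:R = (r + i)%:R - (b + i)%:R :> R by rewrite !natrD; ring.
by apply: hypg_dist_pair_step; lia.
Qed.

Lemma hypg_dist_path m n' m' :
  (m <= n)%N -> (m' <= m)%N -> (m - m' <= n - n')%N ->
  balanced (m - m') -> balanced (n - m) -> balanced (n - n' - (m - m')) ->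
  hypg_dist k m (n - m) (m - m') (n - n' - (m - m')) <=
    n'%:R * pc `|m%:R - (n - m)%:R| + `|n'%:R - 2 * m'%:R| * rc.
Proof.
move=> le_mn le_m'm le_mm' bal_r bal_mn bal_b.
set r := (m - m')%N; set b := (n - n' - (m - m'))%N.
suff [P le_Pn' dist_le] : exists2 P : nat, (P <= n')%N &
    hypg_dist k m (n - m) r b <= P%:R * pc `|m%:R - (n - m)%:R| + `|n'%:R - 2 * m'%:R| * rc.
  apply: le_trans dist_le _; rewrite lerD2r ler_wpM2r ?ler_nat //.
  by rewrite pair_cost_ge0 ?ler0n ?normr_ge0.
have [le_2m'_n' | lt_n'_2m'] := leqP (2 * m') n'.
- (* remove m' red-blue pairs, then n' - 2 m' blue balls *)
  exists m'; first lia.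
  have -> : `|n'%:R - 2 * m'%:R| = (n' - 2 * m')%:R :> R.
    by rewrite natrB // natrM ger0_norm // subr_ge0 -natrM ler_nat.
  have -> : m = (r + m')%N by lia.
  have -> : (n - (r + m'))%N = (b + (n' - 2 * m') + m')%N by lia.
  apply: le_trans (hypg_dist_triangle k _ _ r (b + (n' - 2 * m')) _ _) _.
  rewrite lerD ?hypg_dist_addB //.
  have -> : (r + m')%:R - (b + (n' - 2 * m') + m')%:R = r%:R - (b + (n' - 2 * m'))%:R :> R.
    by rewrite !natrD; ring.
  by apply: hypg_dist_addRB; lia.
have -> : `|n'%:R - 2 * m'%:R| = (2 * m' - n')%:R :> R.
  by rewrite distrC natrB ?natrM ?ger0_norm // ?subr_ge0 -?natrM ?ler_nat; lia.
have [le_m'_n' | lt_n'_m'] := leqP m' n'.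
- (* remove n' - m' pairs, then 2 m' - n' red balls *)
  exists (n' - m')%N; first lia.
  have -> : m = (r + (2 * m' - n') + (n' - m'))%N by lia.
  have -> : (n - (r + (2 * m' - n') + (n' - m')))%N = (b + (n' - m'))%N by lia.
  apply: le_trans (hypg_dist_triangle k _ _ (r + (2 * m' - n')) b _ _) _.
  rewrite lerD ?hypg_dist_addR //.
  have -> : (r + (2 * m' - n') + (n' - m'))%:R - (b + (n' - m'))%:R =
      (r + (2 * m' - n'))%:R - b%:R :> R by rewrite !natrD; ring.
  by apply: hypg_dist_addRB; lia.
- (* remove m' red balls, then add m' - n' blue balls *)
  exists 0%N => //; rewrite mul0r add0r.
  have -> : m = (r + m')%N by lia.
  have -> : b = (n - (r + m') + (m' - n'))%N by lia.
  have -> : (2 * m' - n')%N = (m' + (m' - n'))%N by lia.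
  rewrite natrD mulrDl.
  apply: le_trans (hypg_dist_triangle k _ _ r (n - (r + m')) _ _) _.
  apply: lerD; first by apply: hypg_dist_addR; lia.
  by rewrite hypg_distC; apply: hypg_dist_addB; lia.
Qed.

End Path.

Lemma hypg_dist_small_gamma (n m n' m' k : nat) (g t : R) :
  (m <= n)%N -> (m' <= m)%N -> (m - m' <= n - n')%N ->
  0 < g -> g <= 100^-1 -> 0 <= t -> t <= (100 * Num.sqrt g)^-1 ->
  (0 < k)%N -> k%:R <= g * n%:R -> n'%:R <= g * n%:R ->
  `|m%:R - n%:R / 2| <= t * Num.sqrt n%:R ->
  `|m'%:R - n'%:R / 2| <= t * Num.sqrt n'%:R ->
  2^-1 * hypg_dist k m (n - m) (m - m') (n - n' - (m - m')) <= 100 * (1 + t) * g.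
Proof.
move=> le_mn le_m'm le_mm' g_gt0 g_small t_ge0 t_le k_gt0 k_le n'_le dev_m dev_m'.
have gn_ge1 : 1 <= g * n%:R by apply: le_trans k_le; rewrite ler1n.
have k_small : (100 * k <= n)%N by rewrite -(ler_nat R) natrM; nra.
have dev_n : t * Num.sqrt n%:R <= n%:R / 100 by exact: (sqrt_dev_le g_gt0).
have dev_n' : t * Num.sqrt n'%:R <= n%:R / 100.
  apply: le_trans dev_n; apply: ler_wpM2l => //.
  rewrite ler_sqrt // ler_nat -(ler_nat R); nra.
have n'_small : 100 * n'%:R <= n%:R :> R by nra.
have [bal_r bal_mn bal_b] := balanced_counts le_mn le_m'm le_mm' n'_small
  (le_trans dev_m dev_n) (le_trans dev_m' dev_n').
have dist_le := hypg_dist_path k_gt0 k_small le_mn le_m'm le_mm' bal_r bal_mn bal_b.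
apply: le_trans (ler_wpM2l _ dist_le) _; first lra.
apply: path_cost_le; rewrite ?normr_ge0 //; try nra.
- have -> : m%:R - (n - m)%:R = 2 * (m%:R - n%:R / 2) :> R by rewrite natrB //; field.
  by rewrite normrM ger0_norm // -mulrA ler_wpM2l.
- have -> : n'%:R - 2 * m'%:R = - (2 * (m'%:R - n'%:R / 2)) :> R by field.
  by rewrite normrN normrM ger0_norm // -mulrA ler_wpM2l.
Qed.

End Hypergeometric.

Theorem lemma10 (R : realType) :
  exists C : R, forall (n m n' m' k : nat) (gamma t : R),
    (m <= n)%N -> (n' <= n)%N -> (m' <= m)%N -> (m - m' <= n - n')%N ->
    0 < gamma -> gamma <= 2^-1 ->
    k%:R <= gamma * n%:R -> n'%:R <= gamma * n%:R ->
    0 <= t -> t <= (100 * Num.sqrt gamma)^-1 ->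
    `|m%:R - n%:R / 2| <= t * Num.sqrt n%:R ->
    `|m'%:R - n'%:R / 2| <= t * Num.sqrt n'%:R ->
    dTV (@hyp_pmf R n m k) (@hyp_pmf R (n - n') (m - m') k) <= C * (1 + t) * gamma.
Proof.
exists 100 => n m n' m' k g t le_mn le_n'n le_m'm le_mm' g_gt0 g_le_half k_le n'_le
  t_ge0 t_le dev_m dev_m'.
have -> : dTV (@hyp_pmf R n m k) (@hyp_pmf R (n - n') (m - m') k) =
    2^-1 * hypg_dist R k m (n - m) (m - m') (n - n' - (m - m')).
  by rewrite /dTV; congr (_ * _); apply: eq_bigr => j _; rewrite !hyp_pmfE.
have [g_small | g_big] := lerP g 100^-1; last first.
  have gn_le : 0 <= (2^-1 - g) * n%:R by rewrite mulr_ge0 // subr_ge0.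
  have n_ge0 := ler0n R n.
  have le_k_n : (k <= n)%N by rewrite -(ler_nat R); lra.
  have le_k_n' : (k <= n - n')%N by rewrite -(ler_nat R) natrB //; lra.
  have := @hypg_dist_le2 R k m (n - m) (m - m') (n - n' - (m - m')).
  rewrite !subnKC // => /(_ le_k_n le_k_n'); nra.
case: k k_le => [|k] k_le; first by rewrite hypg_dist0 mulr0; nra.
exact: hypg_dist_small_gamma.
Qed.
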